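(* Let $S$ be a category, $M=\mathrm{U_{mon}}(S)$, and $a\in S$. Then $\varepsilon_S(a)\leqslant_M 1$ iff $a\leqslant_S \mathrm{s}(a)$, and $\varepsilon_S(a)\mathbin{\widetilde\leqslant}_M 1$ iff $a\mathbin{\widetilde\leqslant}_S\mathrm{t}(a)$. Furthermore, for every $\boldsymbol{b}\in M\setminus\{1\}$: if $a$ is not right invertible in $S$, then $\varepsilon_S(a)\leqslant_M\boldsymbol{b}$ iff $a\leqslant_S\nabla_0(\boldsymbol{b})$; and if $a$ is not left invertible in $S$, then $\varepsilon_S(a)\mathbin{\widetilde\leqslant}_M\boldsymbol{b}$ iff $a\mathbin{\widetilde\leqslant}_S\nabla_1(\boldsymbol{b})$.
   Context: Categories are arrow-only: a set $S$ with partial associative multiplication, identities $\mathrm{Id}\,S$, source/target identities $\mathrm{s}(x),\mathrm{t}(x)$. $\mathrm{U_{mon}}(S)$ is the monoid presented by generators $\varepsilon_S(x)$ ($x\in S$) and relations $\varepsilon_S(e)=1$ ($e\in\mathrm{Id}\,S$), $\varepsilon_S(x)\varepsilon_S(y)=\varepsilon_S(xy)$ whenever $xy$ is defined. Every $\boldsymbol{b}\in\mathrm{U_{mon}}(S)$ can be written uniquely as $\varepsilon_S(b_1)\cdots\varepsilon_S(b_n)$ with each $b_i\notin\mathrm{Id}\,S$ and each product $b_ib_{i+1}$ undefined (the reduced sequence $(b_1,\dots,b_n)$ of $\boldsymbol b$); for $\boldsymbol b\ne1$ (i.e. $n>0$), set $\nabla_0(\boldsymbol{b})=b_1$ and $\nabla_1(\boldsymbol{b})=b_n$.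 In any category (or monoid) $C$, $a\leqslant_C b$ means $b=ax$ for some $x\in C$, and $a\mathbin{\widetilde\leqslant}_C b$ means $b=xa$ for some $x\in C$. $a$ is right (left) invertible if $ax$ (resp. $xa$) is an identity for some $x$. *)

From Stdlib Require Import List Relations.
Import ListNotations.
Unset Implicit Arguments.

(* An (arrow-only) category: partial multiplication [mul x y = Some (xy)]
   when xy is defined; composition is written left to right (x then y). *)
Record Category := {
  carrier :> Type;
  mul : carrier -> carrier -> option carrier;
  src : carrier -> carrier;
  tgt : carrier -> carrier;
  mul_s : forall x, mul (src x) x = Some x;
  mul_t : forall x, mul x (tgt x) = Some x;
  src_id : forall x y z, (mul (src x) y = Some z -> z = y) /\ (mul y (src x) = Some z -> z = y);
  tgt_id : forall x y z, (mul (tgt x) y = Some z -> z = y) /\ (mul y (tgt x) = Some z -> z = y);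
  defined_iff : forall x y, (exists z, mul x y = Some z) <-> tgt x = src y;
  src_mul : forall x y z, mul x y = Some z -> src z = src x;
  tgt_mul : forall x y z, mul x y = Some z -> tgt z = tgt y;
  mul_assoc : forall x y z xy yz, mul x y = Some xy -> mul y z = Some yz ->
                mul xy z = mul x yz
}.

Section Defs.
Variable S : Category.

Definition is_id (e : S) : Prop :=
  forall x y, (mul S e x = Some y -> y = x) /\ (mul S x e = Some y -> y = x).

Definition leS (a b : S) : Prop := exists x, mul S a x = Some b.
Definition leS_tilde (a b : S) : Prop := exists x, mul S x a = Some b.

Definition right_invertible (a : S) : Prop :=
  exists x e, mul S a x = Some e /\ is_id e.
Definition left_invertible (a : S) : Prop :=
  exists x e, mul S x a = Some e /\ is_id e.

(* U_mon(S): words over S (free monoid, product = ++, unit = []) modulo the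
   congruence generated by  [e] ~ []  (e identity) and [x;y] ~ [xy]. *)
Inductive ustep : list S -> list S -> Prop :=
  | ustep_id : forall u v e, is_id e -> ustep (u ++ e :: v) (u ++ v)
  | ustep_mul : forall u v x y z, mul S x y = Some z ->
      ustep (u ++ x :: y :: v) (u ++ z :: v).

Definition ueq : list S -> list S -> Prop := clos_refl_sym_trans _ ustep.

(* eps_S(x) is the class of [x]; 1 is the class of [] *)
Definition eps (x : S) : list S := [x].

Definition leM (u w : list S) : Prop := exists x, ueq (u ++ x) w.
Definition leM_tilde (u w : list S) : Prop := exists x, ueq (x ++ u) w.

Fixpoint reduced (r : list S) : Prop :=
  match r with
  | [] => True
  | x :: r' => ~ is_id x /\
               match r' with [] => True | y :: _ => mul S x y = None end /\
               reduced r'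
  end.

(* nabla_0 and nabla_1 of the element with nonempty reduced sequence b0 :: rest *)
Definition nabla0 (b0 : S) (rest : list S) : S := b0.
Definition nabla1 (b0 : S) (rest : list S) : S := last rest b0.
End Defs.
Arguments is_id {S} e.
Arguments leS {S} a b.
Arguments leS_tilde {S} a b.
Arguments right_invertible {S} a.
Arguments left_invertible {S} a.
Arguments ustep {S} _ _.
Arguments ueq {S} _ _.
Arguments eps {S} x.
Arguments leM {S} u w.
Arguments leM_tilde {S} u w.
Arguments reduced {S} r.
Arguments nabla0 {S} b0 rest.
Arguments nabla1 {S} b0 rest.

(* Reduced sequences are normal forms: pushing a generator onto a reduced word
   (composing with its head, dropping identities) is compatible with the
   defining relations of U_mon(S), so the normal form of eps(a) x is
   [push a (nf x)].  Its head is a, a product a y, or disappears when a y is an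
   identity; this gives both characterisations of eps(a) <= b.  The statements
   about the reversed order follow by passing to the opposite category, whose
   words are the reversed words of S. *)
From Stdlib Require Import List Relations ClassicalEpsilon.
Import ListNotations.

Lemma clos_rst_map (A B : Type) (R : relation A) (R' : relation B) (f : A -> B) :
  (forall u w, R u w -> R' (f u) (f w)) ->
  forall u w, clos_refl_sym_trans A R u w -> clos_refl_sym_trans B R' (f u) (f w).
Proof.
  intros Hf u w H; induction H.
  - apply rst_step, Hf; assumption.
  - apply rst_refl.
  - apply rst_sym; assumption.
  - eapply rst_trans; eassumption.
Qed.

Section NormalForm.
Variable S : Category.

Lemma id_src (e : S) : is_id e -> src S e = e.
Proof. intros He. symmetry. apply (proj2 (He (src S e) e)), mul_s. Qed.

Lemma id_tgt (e : S) : is_id e -> tgt S e = e.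
Proof. intros He. symmetry. apply (proj1 (He (tgt S e) e)), mul_t. Qed.

Lemma src_is_id (x : S) : is_id (src S x).
Proof. intros y z. apply src_id. Qed.

Lemma tgt_src_of_mul (x y z : S) : mul S x y = Some z -> tgt S x = src S y.
Proof. intros H. apply defined_iff. eauto. Qed.

Lemma mul_None_tgt (y z w : S) :
  tgt S z = tgt S y -> mul S y w = None -> mul S z w = None.
Proof.
  intros E Hyw. destruct (mul S z w) as [p|] eqn:Hzw; [|reflexivity].
  assert (Hdef : exists q, mul S y w = Some q).
  { apply defined_iff. rewrite <- E. exact (tgt_src_of_mul z w p Hzw). }
  destruct Hdef as [q Hq]. congruence.
Qed.

Lemma leS_refl (x : S) : leS x x.
Proof. exists (tgt S x). apply mul_t. Qed.

Lemma id_right_invertible (e : S) : is_id e -> right_invertible e.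
Proof. intros He. exists e, e. rewrite <- (id_tgt e He) at 2. auto using mul_t. Qed.

Lemma reduced_cons_tgt (y z : S) (r : list S) :
  reduced (y :: r) -> ~ is_id z -> tgt S z = tgt S y -> reduced (z :: r).
Proof.
  intros (_ & Hyr & Hr) Hz E. repeat split; auto.
  destruct r as [|w r]; auto. exact (mul_None_tgt y z w E Hyr).
Qed.

Lemma reduced_snoc (l : list S) (x y : S) :
  reduced (l ++ [y]) -> ~ is_id x -> mul S y x = None -> reduced (l ++ [y; x]).
Proof.
  intros Hl Hx Hyx. induction l as [|v l IH]; simpl in *.
  - tauto.
  - destruct Hl as (Hv & Hvl & Hl). repeat split; auto.
    destruct l; exact Hvl.
Qed.

(* [is_id] is not decidable in general, hence the classical choice. *)
Definition isid_dec (e : S) := excluded_middle_informative (is_id e).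

Definition push (x : S) (r : list S) : list S :=
  if isid_dec x then r else
  match r with
  | [] => [x]
  | y :: r' =>
      match mul S x y with
      | Some z => if isid_dec z then r' else z :: r'
      | None => x :: y :: r'
      end
  end.

Definition nf (u : list S) : list S := fold_right push [] u.

Lemma push_id (x : S) (r : list S) : is_id x -> push x r = r.
Proof. intros Hx. unfold push. destruct (isid_dec x); tauto. Qed.

Lemma push_reduced_cons (y : S) (r : list S) : reduced (y :: r) -> push y r = y :: r.
Proof.
  intros (Hy & Hyr & _). unfold push. destruct (isid_dec y); [tauto|].
  destruct r as [|w r]; [reflexivity|]. rewrite Hyr. reflexivity.
Qed.

Lemma push_undef (x y : S) (r : list S) :
  ~ is_id x -> mul S x y = None -> push x (y :: r) = x :: y :: r.
Proof.
  intros Hx Hxy. unfold push. destruct (isid_dec x); [tauto|]. rewrite Hxy. reflexivity.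
Qed.

Lemma push_def (x y z : S) (r : list S) :
  reduced (y :: r) -> mul S x y = Some z -> push x (y :: r) = push z r.
Proof.
  intros Hyr Hxy. unfold push at 1. destruct (isid_dec x) as [Hx|Hx].
  - rewrite (proj1 (Hx y z) Hxy). symmetry. exact (push_reduced_cons y r Hyr).
  - rewrite Hxy. destruct (isid_dec z) as [Hz|Hz].
    + symmetry. exact (push_id z r Hz).
    + symmetry. apply push_reduced_cons.
      apply (reduced_cons_tgt y); [exact Hyr | exact Hz | exact (tgt_mul S x y z Hxy)].
Qed.

Lemma push_reduced (x : S) (r : list S) : reduced r -> reduced (push x r).
Proof.
  intros Hr. destruct (isid_dec x) as [Hx|Hx]; [rewrite push_id; auto|].
  destruct r as [|y r]; [unfold push; destruct (isid_dec x); simpl; tauto|].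
  destruct (mul S x y) as [z|] eqn:Hxy.
  - rewrite (push_def x y z r Hr Hxy). unfold push.
    destruct (isid_dec z) as [|Hz]; [exact (proj2 (proj2 Hr))|].
    destruct r as [|w r]; [simpl; tauto|].
    rewrite (mul_None_tgt y z w (tgt_mul S x y z Hxy) (proj1 (proj2 Hr))).
    exact (reduced_cons_tgt y z (w :: r) Hr Hz (tgt_mul S x y z Hxy)).
  - rewrite (push_undef x y r Hx Hxy). simpl. tauto.
Qed.

Lemma nf_reduced (u : list S) : reduced (nf u).
Proof. induction u; simpl; auto using push_reduced. Qed.

Lemma nf_id (r : list S) : reduced r -> nf r = r.
Proof.
  induction r as [|y r IH]; [reflexivity|]. intros Hyr. simpl.
  rewrite IH by exact (proj2 (proj2 Hyr)). exact (push_reduced_cons y r Hyr).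
Qed.

Lemma push_assoc (x y z : S) (r : list S) :
  reduced r -> mul S x y = Some z -> push x (push y r) = push z r.
Proof.
  revert y z. induction r as [|w r IH]; intros y z Hr Hxy;
    (destruct (isid_dec y) as [Hy|Hy];
     [rewrite (push_id y), (proj2 (Hy x z) Hxy) by exact Hy; reflexivity|]).
  - rewrite (push_reduced_cons y []) by (simpl; tauto).
    apply push_def; [simpl; tauto | exact Hxy].
  - destruct (mul S y w) as [q|] eqn:Hyw.
    + assert (Hxq : exists p, mul S x q = Some p).
      { apply defined_iff. rewrite (src_mul S y w q Hyw).
        exact (tgt_src_of_mul x y z Hxy). }
      destruct Hxq as [p Hxq].
      rewrite (push_def y w q r Hr Hyw), (IH q p (proj2 (proj2 Hr)) Hxq).
      symmetry. apply push_def; [exact Hr|].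
      rewrite (mul_assoc S x y w z q Hxy Hyw). exact Hxq.
    + rewrite (push_undef y w r Hy Hyw).
      apply push_def; [simpl; tauto | exact Hxy].
Qed.

Lemma ustep_nf (u w : list S) : ustep u w -> nf u = nf w.
Proof.
  intros H. destruct H; unfold nf; rewrite !fold_right_app; simpl; f_equal.
  - apply push_id; assumption.
  - apply push_assoc; [apply nf_reduced | assumption].
Qed.

Lemma ueq_nf (u w : list S) : ueq u w -> nf u = nf w.
Proof. intros H. induction H; auto using ustep_nf; congruence. Qed.

Lemma push_eq_nil (a : S) (r : list S) : push a r = [] -> leS a (src S a).
Proof.
  unfold push. destruct (isid_dec a) as [Ha|Ha]; intros Hr.
  - rewrite (id_src a Ha). apply leS_refl.
  - destruct r as [|y r]; [discriminate|].
    destruct (mul S a y) as [q|] eqn:Hay; [|discriminate].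
    destruct (isid_dec q) as [Hq|]; [|discriminate].
    exists y. rewrite Hay, <- (src_mul S a y q Hay), (id_src q Hq). reflexivity.
Qed.

Lemma push_eq_cons (a b0 : S) (r rest : list S) :
  ~ right_invertible a -> push a r = b0 :: rest -> leS a b0.
Proof.
  intros Hna. unfold push. destruct (isid_dec a) as [Ha|Ha].
  { exfalso. exact (Hna (id_right_invertible a Ha)). }
  destruct r as [|y r]; [intros [= <- _]; apply leS_refl|].
  destruct (mul S a y) as [q|] eqn:Hay; [|intros [= <- _]; apply leS_refl].
  destruct (isid_dec q) as [Hq|]; [|intros [= <- _]; exists y; exact Hay].
  exfalso. apply Hna. exists y, q. split; assumption.
Qed.

Lemma leM_eps_nil (a : S) : leM (eps a) [] <-> leS a (src S a).
Proof.
  split.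
  - intros [x Hx]. apply ueq_nf in Hx. exact (push_eq_nil a (nf x) Hx).
  - intros [x Hx]. exists [x].
    apply rst_trans with [src S a]; apply rst_step.
    + exact (ustep_mul S [] [] a x (src S a) Hx).
    + exact (ustep_id S [] [] (src S a) (src_is_id a)).
Qed.

Lemma leM_eps_reduced (a b0 : S) (rest : list S) :
  reduced (b0 :: rest) -> ~ right_invertible a ->
  (leM (eps a) (b0 :: rest) <-> leS a b0).
Proof.
  intros Hb Hna. split.
  - intros [x Hx]. apply ueq_nf in Hx. rewrite (nf_id _ Hb) in Hx.
    exact (push_eq_cons a b0 (nf x) rest Hna Hx).
  - intros [x Hx]. exists (x :: rest). apply rst_step.
    exact (ustep_mul S [] rest a x b0 Hx).
Qed.
End NormalForm.

Section Opposite.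
Variable S : Category.

Definition opC : Category.
Proof.
  refine {| carrier := carrier S; mul := fun x y => mul S y x;
            src := tgt S; tgt := src S |}.
  - exact (mul_t S).
  - exact (mul_s S).
  - intros x y z. destruct (tgt_id S x y z); auto.
  - intros x y z. destruct (src_id S x y z); auto.
  - intros x y. rewrite defined_iff. split; auto.
  - intros x y z H. exact (tgt_mul S y x z H).
  - intros x y z H. exact (src_mul S y x z H).
  - intros x y z xy yz Hxy Hyz. symmetry. exact (mul_assoc S z y x yz xy Hyz Hxy).
Defined.

Lemma is_id_op (e : S) : @is_id opC e <-> is_id e.
Proof. unfold is_id; simpl. split; intros H x y; destruct (H x y); auto. Qed.

Lemma ustep_op (u w : list S) : ustep u w -> @ustep opC (rev u) (rev w).
Proof.
  intros H. destruct H; rewrite !rev_app_distr; simpl; rewrite <- !app_assoc; simpl.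
  - apply (@ustep_id opC). apply is_id_op; assumption.
  - apply (@ustep_mul opC). assumption.
Qed.

Lemma ustep_unop (u w : list S) : @ustep opC u w -> ustep (rev u) (rev w).
Proof.
  intros H. destruct H; rewrite !rev_app_distr; simpl; rewrite <- !app_assoc; simpl.
  - apply ustep_id. apply is_id_op; assumption.
  - apply ustep_mul. assumption.
Qed.

Lemma leM_tilde_op (u w : list S) : leM_tilde u w <-> @leM opC (rev u) (rev w).
Proof.
  split; intros [x Hx]; exists (rev x).
  - rewrite <- rev_app_distr. exact (clos_rst_map _ _ _ _ _ ustep_op _ _ Hx).
  - rewrite <- (rev_involutive u), <- rev_app_distr, <- (rev_involutive w).
    exact (clos_rst_map _ _ _ _ _ ustep_unop _ _ Hx).
Qed.

Lemma reduced_rev (x : S) (r : list S) : reduced (x :: r) -> @reduced opC (rev (x :: r)).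
Proof.
  revert x. induction r as [|y r IH]; intros x (Hx & Hxr & Hr).
  - simpl. rewrite is_id_op. tauto.
  - change (@reduced opC ((rev r ++ [y]) ++ [x])). rewrite <- app_assoc.
    apply (reduced_snoc opC); [exact (IH y Hr) | rewrite is_id_op; exact Hx | exact Hxr].
Qed.

Lemma rev_cons_last (b0 : S) (rest : list S) :
  exists l, rev (b0 :: rest) = last rest b0 :: l.
Proof.
  destruct (@exists_last _ (b0 :: rest)) as (l & z & E); [discriminate|].
  exists (rev l). rewrite E, rev_app_distr.
  replace (last rest b0) with (last (b0 :: rest) b0) by (destruct rest; reflexivity).
  rewrite E, last_last. reflexivity.
Qed.
End Opposite.

Theorem lemma5p3 (S : Category) (a : S) :
  (leM (eps a) [] <-> leS a (src S a)) /\
  (leM_tilde (eps a) [] <-> leS_tilde a (tgt S a)) /\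
  (forall (b0 : S) (rest : list S), reduced (b0 :: rest) ->
     (~ right_invertible a -> (leM (eps a) (b0 :: rest) <-> leS a (nabla0 b0 rest))) /\
     (~ left_invertible a ->
        (leM_tilde (eps a) (b0 :: rest) <-> leS_tilde a (nabla1 b0 rest)))).
Proof.
  split; [apply leM_eps_nil|]. split.
  { rewrite leM_tilde_op. exact (leM_eps_nil (opC S) a). }
  intros b0 rest Hb. split; [apply leM_eps_reduced; exact Hb|].
  intros Hna. rewrite leM_tilde_op.
  pose proof (reduced_rev S b0 rest Hb) as Hr.
  destruct (rev_cons_last S b0 rest) as [l E]. rewrite E in *.
  apply (leM_eps_reduced (opC S)); [exact Hr|].
  intros (x & e & Hxa & He). apply Hna. exists x, e.
  split; [exact Hxa | apply is_id_op; exact He].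
Qed.
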